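(* Let $P$ be any finite poset. For $x\in P$ let $C(x)$ be the size of the largest chain containing $x$ and $A(x)$ the size of the largest antichain containing $x$. Then \[ \sum_{x\in P}\frac{1}{A(x)\,C(x)}\le 1. \]
   Context: A chain in a poset is a set of pairwise comparable elements; an antichain is a set of pairwise incomparable elements. *)

From mathcomp Require Import all_boot all_order all_algebra.
Set Implicit Arguments. Unset Strict Implicit. Unset Printing Implicit Defensive.
Import Order.TTheory GRing.Theory Num.Theory.
Local Open Scope order_scope.

Section PosetDefs.
Context {disp : Order.disp_t} {T : finPOrderType disp}.

Definition is_chain (S : {set T}) : bool :=
  [forall x in S, forall y in S, x >=< y].

Definition is_antichain (S : {set T}) : bool :=
  [forall x in S, forall y in S, (x != y) ==> (x >< y)].

Definition maxchain (x : T) : nat :=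
  \max_(S : {set T} | is_chain S && (x \in S)) #|S|.

Definition maxantichain (x : T) : nat :=
  \max_(S : {set T} | is_antichain S && (x \in S)) #|S|.

End PosetDefs.

From mathcomp Require Import all_boot all_order all_algebra.
From mathcomp Require Import zify ring.
Import Order.TTheory GRing.Theory Num.Theory.
Set Implicit Arguments. Unset Strict Implicit.

(** Put weight [w x = L / C(x)] on each [x], with [L = |P|!].  Every chain [S]
    has total weight at most [L], since [C(y) >= |S|] for [y] in [S].  Stack the
    weights along chains: let [h x] be the heaviest chain with top [x] and give
    [x] the interval [[h x - w x, h x)] inside [[0, L)].  Comparable elements get
    disjoint intervals, so each level [t < L] meets an antichain, on which
    [1/A(x)] sums to at most [1].  Summing over the [L] levels gives
    [sum_x w x / A(x) <= L], which is the claim after dividing by [L]. *)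

Lemma sumr_nat_interval (R : nmodType) (a : R) (m n N : nat) :
  (m <= n <= N)%N -> (\sum_(0 <= t < N | (m <= t < n)%N) a = a *+ (n - m))%R.
Proof.
case/andP=> mn nN.
rewrite (big_cat_nat (leq0n m) (leq_trans mn nN)) (big_cat_nat mn nN) /=.
rewrite [X in (X + _)%R]big_nat_cond [X in (X + _)%R]big_pred0 => [|t]; last by apply/negbTE; lia.
rewrite [X in (_ + (_ + X))%R]big_nat_cond [X in (_ + (_ + X))%R]big_pred0 => [|t]; last by apply/negbTE; lia.
rewrite add0r addr0 big_nat_cond (eq_bigl (fun t => (m <= t < n)%N)) => [|t]; last exact: andbb.
by rewrite -big_nat sumr_const_nat.
Qed.

Section Poset.
Context (disp : Order.disp_t) (T : finPOrderType disp).
Local Open Scope order_scope.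
Implicit Types (x y : T) (S : {set T}).

Lemma is_chain_set1 x : is_chain [set x].
Proof.
apply/forallP=> a; apply/implyP; rewrite in_set1 => /eqP->.
by apply/forallP=> b; apply/implyP; rewrite in_set1 => /eqP->; rewrite comparablexx.
Qed.

Lemma is_antichain_set1 x : is_antichain [set x].
Proof.
apply/forallP=> a; apply/implyP; rewrite in_set1 => /eqP->.
by apply/forallP=> b; apply/implyP; rewrite in_set1 => /eqP->; rewrite eqxx.
Qed.

Lemma is_chain_setU1 S y :
  is_chain S -> {in S, forall z, z <= y} -> is_chain (y |: S).
Proof.
move=> /forallP cS leSy.
have cmp_y z : z \in S -> y >=< z by move=> zS; rewrite comparable_sym le_comparable ?leSy.
apply/forallP=> a; apply/implyP; rewrite in_setU1 => /orP[/eqP->|aS];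
  apply/forallP=> b; apply/implyP; rewrite in_setU1 => /orP[/eqP->|bS].
- exact: comparablexx.
- exact: cmp_y.
- by rewrite comparable_sym cmp_y.
- by move: (cS a); rewrite aS => /forallP /(_ b); rewrite bS.
Qed.

Lemma card_le_maxchain S x : is_chain S -> x \in S -> (#|S| <= maxchain x)%N.
Proof.
move=> cS xS.
by apply: (leq_bigmax_cond (P := fun S => is_chain S && (x \in S))); rewrite cS xS.
Qed.

Lemma card_le_maxantichain S x :
  is_antichain S -> x \in S -> (#|S| <= maxantichain x)%N.
Proof.
move=> aS xS.
by apply: (leq_bigmax_cond (P := fun S => is_antichain S && (x \in S))); rewrite aS xS.
Qed.

Lemma maxchain_gt0 x : (0 < maxchain x)%N.
Proof. by rewrite -(cards1 x) card_le_maxchain ?is_chain_set1 ?set11. Qed.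

Lemma maxantichain_gt0 x : (0 < maxantichain x)%N.
Proof. by rewrite -(cards1 x) card_le_maxantichain ?is_antichain_set1 ?set11. Qed.

Lemma maxchain_le_card x : (maxchain x <= #|T|)%N.
Proof. by apply/bigmax_leqP => S _; apply: max_card. Qed.

Section ChainLayers.
Variables (w : T -> nat) (L : nat).
Hypothesis chain_weight_le : forall S, is_chain S -> (\sum_(y in S) w y <= L)%N.

Definition is_chain_to x S := [&& is_chain S, [forall y in S, y <= x] & x \in S].

Definition height x : nat := \max_(S | is_chain_to x S) \sum_(y in S) w y.

Lemma is_chain_to_set1 x : is_chain_to x [set x].
Proof.
rewrite /is_chain_to is_chain_set1 set11 andbT /=.
by apply/forallP=> y; apply/implyP; rewrite in_set1 => /eqP->.
Qed.

Lemma weight_le_height x : (w x <= height x)%N.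
Proof.
have -> : w x = \sum_(y in [set x]) w y by rewrite big_set1.
exact: (leq_bigmax_cond (P := is_chain_to x)) (is_chain_to_set1 x).
Qed.

Lemma height_le x : (height x <= L)%N.
Proof. by apply/bigmax_leqP => S /and3P[cS _ _]; apply: chain_weight_le. Qed.

Lemma height_lt x y : x < y -> (height x + w y <= height y)%N.
Proof.
move=> xy.
have chain_to_x : (0 < #|is_chain_to x|)%N.
  by apply/card_gt0P; exists [set x]; apply: is_chain_to_set1.
have [S chain_to_S hx] := eq_bigmax_cond (fun S => \sum_(z in S) w z) chain_to_x.
have -> : height x = \sum_(z in S) w z by rewrite -hx.
move: chain_to_S; rewrite unfold_in => /and3P[cS /forall_inP leSx xS].
have leSy : {in S, forall z, z <= y} by move=> z /leSx zx; rewrite (le_trans zx) ?ltW.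
have yNS : y \notin S by apply/negP=> /leSx /(lt_le_trans xy); rewrite ltxx.
rewrite addnC -big_setU1 //=.
apply: (leq_bigmax_cond (P := is_chain_to y)).
rewrite /is_chain_to is_chain_setU1 // setU11 andbT /=.
by apply/forall_inP=> z; rewrite in_setU1 => /orP[/eqP->//|/leSy].
Qed.

Definition layer t := [set x | (height x - w x <= t < height x)%N].

Lemma is_antichain_layer t : is_antichain (layer t).
Proof.
apply/forall_inP=> x; rewrite inE => /andP[x1 x2].
apply/forall_inP=> y; rewrite inE => /andP[y1 y2].
apply/implyP=> nxy; apply/negP=> /orP[] le.
- by have := @height_lt x y; rewrite lt_neqAle nxy le => /(_ isT); lia.
- by have := @height_lt y x; rewrite lt_neqAle eq_sym nxy le => /(_ isT); lia.
Qed.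

Local Open Scope ring_scope.

Lemma weighted_sum_le (R : numDomainType) (f : T -> R) :
  (forall S, is_antichain S -> \sum_(x in S) f x <= 1) ->
  \sum_x (w x)%:R * f x <= L%:R.
Proof.
move=> antichain_f_le.
have levels x : (w x)%:R * f x = \sum_(0 <= t < L | x \in layer t) f x.
  rewrite (eq_bigl (fun t => height x - w x <= t < height x)%N) => [|t]; last by rewrite inE.
  rewrite sumr_nat_interval ?leq_subr ?height_le // mulr_natl.
  by rewrite subKn ?weight_le_height.
under eq_bigr do rewrite levels big_mkcond.
rewrite exchange_big /= -[L in L%:R](subn0 L) -sumr_const_nat.
by apply: ler_sum => t _; rewrite -big_mkcond; apply: antichain_f_le (is_antichain_layer t).
Qed.

End ChainLayers.

Lemma chain_sum_div_maxchain S n :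
  is_chain S -> (\sum_(y in S) (n %/ maxchain y) <= n)%N.
Proof.
move=> cS; have [S0|Sp] := posnP #|S|.
  by rewrite big_pred0 // => y; rewrite (card0_eq S0).
apply: (@leq_trans (\sum_(y in S) (n %/ #|S|))).
  by apply: leq_sum => y yS; apply: leq_div2l => //; apply: card_le_maxchain.
by rewrite sum_nat_const mulnC leq_divM.
Qed.

Local Open Scope ring_scope.

Lemma antichain_sum_inv_maxantichain (R : numFieldType) S :
  is_antichain S -> \sum_(x in S) ((maxantichain x)%:R : R)^-1 <= 1.
Proof.
move=> aS; have [S0|Sp] := posnP #|S|.
  by rewrite big_pred0 // => y; rewrite (card0_eq S0).
apply: (@le_trans _ _ (\sum_(x in S) (#|S|%:R : R)^-1)).
  apply: ler_sum => x xS.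
  by rewrite lef_pV2 ?posrE ?ltr0n ?maxantichain_gt0 // ler_nat card_le_maxantichain.
by rewrite sumr_const -[_ *+ _]mulr_natl mulfV // pnatr_eq0 -lt0n.
Qed.

End Poset.

Local Open Scope ring_scope.

Theorem corollary10 (disp : Order.disp_t) (T : finPOrderType disp) :
  \sum_(x : T) 1 / ((maxantichain x)%:R * (maxchain x)%:R : rat) <= 1.
Proof.
pose L := (#|T|)`!.
have L0 : (L%:R : rat) != 0 by rewrite pnatr_eq0 -lt0n fact_gt0.
have weights (x : T) : 1 / ((maxantichain x)%:R * (maxchain x)%:R : rat)
    = L%:R^-1 * ((L %/ maxchain x)%N%:R * (maxantichain x)%:R^-1).
  have A0 : (maxantichain x)%:R != 0 :> rat by rewrite pnatr_eq0 -lt0n maxantichain_gt0.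
  have C0 : (maxchain x)%:R != 0 :> rat by rewrite pnatr_eq0 -lt0n maxchain_gt0.
  rewrite natf_div; last by apply: dvdn_fact; rewrite maxchain_gt0; apply: maxchain_le_card.
  by field; rewrite A0 C0 L0.
under eq_bigr do rewrite weights.
rewrite -mulr_sumr ler_pdivrMl ?ltr0n ?fact_gt0 // mulr1.
apply: weighted_sum_le => S.
- exact: chain_sum_div_maxchain.
- exact: antichain_sum_inv_maxantichain.
Qed.
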